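(* Let $p$ and $p'$ be consecutive patterns of the same length that are both non-overlapping and are interchangeable. Then $p$ and $p'$ are super-strongly Wilf equivalent.
   Context: An inversion sequence of length $n$ is an integer sequence $e=e_1e_2\dots e_n$ with $0\le e_i<i$ for all $i$; $\mathbf{I}_n$ denotes the set of these. A pattern of length $r$ is a sequence $p=p_1\dots p_r$ with $p_i\in\{0,\dots,r-1\}$ such that whenever a value $j>0$ appears in $p$, the value $j-1$ also appears. The reduction of an integer word $w$ is obtained by replacing every occurrence of the $i$-th smallest distinct value of $w$ by $i-1$. An inversion sequence $e$ has an occurrence of the consecutive pattern $p$ in position $i$ if the reduction of $e_i\dots e_{i+r-1}$ equals $p$; $\mathrm{Em}(p,e)$ is the set of such positions. $p=p_1\dots p_r$ is non-overlapping if for every $1<i<r$ the reductions of $p_1\dots p_i$ and $p_{r-i+1}\dots p_r$ differ. Given patterns $p,p'$ of length $r$ with $p_1=p'_1$, $p_r=p'_r$ and $\max_i p_i=\max_i p'_i$, $p$ is changeable for $p'$ if for all $1\le i\le r$, $p'_i\le\max(\{p_j:1\le j\le i\}\cup\{p_j-j+i: i<j\le r\})$; $p$ and $p'$ are interchangeable if each is changeable for the other. Two patterns are super-strongly Wilf equivalent if $|\{e\in\mathbf{I}_n:\mathrm{Em}(p,e)=T\}|=|\{e\in\mathbf{I}_n:\mathrm{Em}(p',e)=T\}|$ for all $n$ and all $T\subseteq[n]$. *)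

From mathcomp Require Import all_boot.
Set Implicit Arguments. Unset Strict Implicit. Unset Printing Implicit Defensive.

Definition red (w : seq nat) : seq nat :=
  [seq index x (sort leq (undup w)) | x <- w].

Definition is_pattern (r : nat) (p : seq nat) : bool :=
  [&& size p == r, all (fun x => x < r) p &
      all (fun x => (0 < x) ==> (x.-1 \in p)) p].

(* Inversion sequences of length n, e = e_1 ... e_n with 0 <= e_i < i.
   Stored 0-indexed as a tuple over 'I_n: entry k (k = i-1) satisfies e_k <= k. *)
Definition is_invseq (n : nat) (e : n.-tuple 'I_n) : bool :=
  [forall k : 'I_n, nat_of_ord (tnth e k) <= k].

(* Occurrence of p in e at (1-indexed) position i: the window
   e_i ... e_{i+r-1} lies inside e and reduces to p. *)
Definition occurs_at (p e : seq nat) (i : nat) : bool :=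
  (0 < i) && (i + size p - 1 <= size e) &&
  (red (take (size p) (drop i.-1 e)) == p).

(* Em(p,e), listed increasingly as a subset of [n] = {1..n}. *)
Definition Em (p e : seq nat) : seq nat :=
  [seq i <- iota 1 (size e) | occurs_at p e i].

Definition count_Em (p : seq nat) (n : nat) (T : seq nat) : nat :=
  #|[pred e : n.-tuple 'I_n | is_invseq e && (Em p (map val e) == T)]|.

Definition non_overlapping (p : seq nat) : bool :=
  [forall i : 'I_(size p), (1 < i) ==> (red (take i p) != red (drop (size p - i) p))].

Definition pmax (p : seq nat) : nat := \max_(x <- p) x.

(* p changeable for p' (0-indexed, i,j < r):
   p'_i <= max({p_j : j <= i} u {p_j - j + i : i < j}).  Truncated nat
   subtraction is harmless since the max always contains p_i >= 0. *)
Definition changeable (p p' : seq nat) : bool :=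
  [&& size p == size p', head 0 p == head 0 p', last 0 p == last 0 p',
      pmax p == pmax p' &
      [forall i : 'I_(size p),
         nth 0 p' i <= \max_(j < size p)
                         (if j <= i then nth 0 p j else nth 0 p j - (j - i))]].

Definition interchangeable (p p' : seq nat) : bool :=
  changeable p p' && changeable p' p.

Definition super_strongly_Wilf_equiv (p p' : seq nat) : Prop :=
  forall (n : nat) (T : seq nat), count_Em p n T = count_Em p' n T.

From mathcomp Require Import all_boot zify.
Set Implicit Arguments. Unset Strict Implicit. Unset Printing Implicit Defensive.

(* Fix n and a set A of starting positions, and let X_q(A) be the inversion
   sequences of length n containing q at (at least) every position of A.  We
   map X_p(A) into X_p'(A) by a swap: each marked window uses a sorted list v
   of distinct values and reduces to p, i.e. equals [v_(p_1), ..., v_(p_r)];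
   replace it by [v_(p'_1), ..., v_(p'_r)].  Since p is non-overlapping two
   marked windows share at most one entry, the last of one and the first of the
   other, and p, p' agree there, so the swap is well defined.  As
   max p = max p', the new window still uses exactly the values v and reduces
   to p'; "p changeable for p'" is precisely what keeps every entry below its
   index.  Swapping back with p undoes the swap, so it is injective, and by
   symmetry #|X_p(A)| = #|X_p'(A)|.  Finally #|X_q(A)| is the sum over B ⊇ A of
   the number of sequences whose occurrence set is exactly B, and such superset
   sums determine their summands; this gives equality of the exact counts. *)

Definition vals (w : seq nat) : seq nat := sort leq (undup w).

Lemma vals_sorted w : sorted ltn (vals w).
Proof. by rewrite ltn_sorted_uniq_leq sort_uniq undup_uniq sort_sorted //; exact: leq_total. Qed.

Lemma vals_uniq w : uniq (vals w).
Proof. by rewrite sort_uniq undup_uniq. Qed.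

Lemma mem_vals w x : (x \in vals w) = (x \in w).
Proof. by rewrite mem_sort mem_undup. Qed.

Lemma sorted_nth_lt (v : seq nat) a b :
  sorted ltn v -> a < b -> b < size v -> nth 0 v a < nth 0 v b.
Proof. by move=> sv ab bs; apply: (sorted_ltn_nth ltn_trans) => //; rewrite inE //; lia. Qed.

Lemma sorted_nth_le (v : seq nat) a b :
  sorted ltn v -> a <= b -> b < size v -> nth 0 v a <= nth 0 v b.
Proof.
move=> sv; rewrite leq_eqVlt => /orP [/eqP -> //|ab] bs.
exact/ltnW/sorted_nth_lt.
Qed.

(* Consecutive entries differ by at least one, so entry b exceeds entry a
   by at least b - a. *)
Lemma sorted_nth_gap (v : seq nat) a b :
  sorted ltn v -> a <= b -> b < size v -> nth 0 v a + (b - a) <= nth 0 v b.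
Proof.
move=> sv; elim: b => [|b IH] ab bs; first by move: ab; rewrite leqn0 => /eqP ->; lia.
move: ab; rewrite leq_eqVlt => /orP [/eqP -> |ab]; first lia.
have := IH ab (ltnW bs); have := sorted_nth_lt sv (ltnSn b) bs; lia.
Qed.

Definition incr_on (g : nat -> nat) (s : seq nat) : Prop :=
  {in s &, forall a b, a < b -> g a < g b}.

Lemma incr_on_inj (g : nat -> nat) (s : seq nat) : incr_on g s -> {in s &, injective g}.
Proof.
move=> g_incr a b ha hb gab; apply/eqP; rewrite eqn_leq; apply/andP; split; rewrite leqNgt.
  by apply/negP => /(g_incr _ _ hb ha); rewrite gab ltnn.
by apply/negP => /(g_incr _ _ ha hb); rewrite gab ltnn.
Qed.

Lemma index_map_in (g : nat -> nat) (s : seq nat) x :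
  {in s &, injective g} -> x \in s -> index (g x) (map g s) = index x s.
Proof.
elim: s => [//|y s IH] g_inj xs /=.
have [->|yx] := eqVneq y x; first by rewrite eqxx.
have xs' : x \in s by move: xs; rewrite inE eq_sym (negPf yx).
have gyx : g y != g x.
  by apply: contra_neq yx => /g_inj; apply; rewrite inE ?eqxx ?xs' ?orbT.
rewrite (negPf gyx) IH // => a b ha hb; apply: g_inj; by rewrite inE ?ha ?hb orbT.
Qed.

Lemma vals_map (g : nat -> nat) (s : seq nat) : incr_on g s -> vals (map g s) = map g (vals s).
Proof.
move=> g_incr; apply: (irr_sorted_eq ltn_trans ltnn); first exact: vals_sorted.
  apply: (@homo_sorted_in _ _ (mem s)); last exact: vals_sorted.
    by move=> a b ha hb; apply: g_incr.
  by apply/allP => x; rewrite mem_vals.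
move=> y; rewrite mem_vals; apply/mapP/mapP => [] [x hx ->]; exists x => //;
  by rewrite mem_vals in hx *.
Qed.

Lemma red_map (g : nat -> nat) (s : seq nat) : incr_on g s -> red (map g s) = red s.
Proof.
move=> g_incr; rewrite /red -/(vals _) vals_map // -map_comp.
apply/eq_in_map => x xs /=; apply: index_map_in; last by rewrite mem_vals.
by move=> a b ha hb; apply: (incr_on_inj g_incr); rewrite -mem_vals.
Qed.

Lemma incr_on_nth (v s : seq nat) :
  sorted ltn v -> all (fun x => x < size v) s -> incr_on (nth 0 v) s.
Proof. by move=> sv /allP s_lt a b ha hb ab; exact: sorted_nth_lt sv ab (s_lt b hb). Qed.

Lemma red_size w : size (red w) = size w.
Proof. exact: size_map. Qed.

Lemma red_lt w x : x \in red w -> x < size (vals w).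
Proof. by case/mapP => y yw ->; rewrite index_mem mem_vals. Qed.

Lemma red_nth w t : t < size w -> nth 0 w t = nth 0 (vals w) (nth 0 (red w) t).
Proof. by move=> tw; rewrite (nth_map 0) // nth_index // mem_vals mem_nth. Qed.

Lemma red_decomp w : w = map (nth 0 (vals w)) (red w).
Proof.
apply: (@eq_from_nth _ 0); first by rewrite size_map red_size.
by move=> t tw; rewrite (nth_map 0) ?red_size // red_nth.
Qed.

Lemma pattern_size r q : is_pattern r q -> size q = r.
Proof. by case/and3P => /eqP. Qed.

Lemma pattern_downclosed r q x y : is_pattern r q -> x \in q -> y <= x -> y \in q.
Proof.
case/and3P=> _ _ /allP q_cl xq; elim: x xq => [|x IH] xq; first by rewrite leqn0 => /eqP ->.
rewrite leq_eqVlt => /orP [/eqP -> //|]; rewrite ltnS; apply: IH.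
by move: (q_cl _ xq).
Qed.

Lemma pmax_in q : 0 < size q -> pmax q \in q.
Proof.
case: q => [//|a q] _; rewrite /pmax big_cons.
elim: q a => [|b q IH] a; first by rewrite big_nil maxn0 inE.
rewrite big_cons maxnA; case: (leqP a b) => _; [move: (IH b) | move: (IH a)];
  by rewrite !inE => /orP [->|->]; rewrite ?orbT.
Qed.

Lemma mem_pattern r q x : is_pattern r q -> 0 < size q -> (x \in q) = (x <= pmax q).
Proof.
move=> q_pat q_ne; apply/idP/idP => h; first exact: (@leq_bigmax_seq _ q xpredT id x h).
exact: pattern_downclosed q_pat (pmax_in q_ne) h.
Qed.

Lemma vals_pattern r q : is_pattern r q -> 0 < size q -> vals q = iota 0 (pmax q).+1.
Proof.
move=> q_pat q_ne; apply: (irr_sorted_eq ltn_trans ltnn); first exact: vals_sorted.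
  exact: iota_ltn_sorted.
by move=> x; rewrite mem_vals mem_iota (mem_pattern _ q_pat q_ne) add0n ltnS.
Qed.

Lemma index_iota0 m x : x < m -> index x (iota 0 m) = x.
Proof.
move=> xm; move: (@index_uniq _ 0 x (iota 0 m)).
by rewrite size_iota nth_iota // add0n => ->; rewrite ?iota_uniq.
Qed.

Lemma red_pattern r q : is_pattern r q -> 0 < size q -> red q = q.
Proof.
move=> q_pat q_ne; rewrite /red -/(vals _) (vals_pattern q_pat q_ne) -[in RHS](map_id q).
by apply/eq_in_map => x xq; rewrite index_iota0 // ltnS -(mem_pattern _ q_pat q_ne).
Qed.

Lemma size_vals_red r q w :
  is_pattern r q -> 0 < size q -> red w = q -> size (vals w) = (pmax q).+1.
Proof.
move=> q_pat q_ne rw; apply/eqP; rewrite eqn_leq; apply/andP; split; last first.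
  by apply: red_lt; rewrite rw pmax_in.
have v_ne : 0 < size (vals w).
  by apply: (@leq_ltn_trans (nth 0 q 0)) => //; apply: red_lt; rewrite rw mem_nth.
set i := (size (vals w)).-1; have iv : i < size (vals w) by rewrite /i; lia.
have /(nthP 0) [t tw wt] : nth 0 (vals w) i \in w by rewrite -mem_vals mem_nth.
have qt : nth 0 q t = i by rewrite -rw (nth_map 0) // wt index_uniq // vals_uniq.
have : i \in q by rewrite -qt mem_nth // -rw red_size.
by rewrite (mem_pattern _ q_pat q_ne) /i; lia.
Qed.

Definition window r (es : seq nat) k : seq nat := take r (drop k es).

Lemma size_window r es k : k + r <= size es -> size (window r es k) = r.
Proof. by move=> h; rewrite size_take size_drop; case: ifP => //; lia. Qed.

Lemma nth_window r es k t : t < r -> nth 0 (window r es k) t = nth 0 es (k + t).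
Proof. by move=> h; rewrite nth_take // nth_drop. Qed.

Definition marked r q (A es : seq nat) n : bool :=
  [&& size es == n, all (fun j => nth 0 es j <= j) (iota 0 n) &
      all (fun k => (k + r <= n) && (red (window r es k) == q)) A].

Definition covers r k j : bool := (k <= j) && (j < k + r).
Definition covered r (A : seq nat) j : bool := has (fun k => covers r k j) A.
Definition cover_start r (A : seq nat) j : nat := nth 0 A (find (fun k => covers r k j) A).

Definition swap_entry r q' (A es : seq nat) j : nat :=
  if covered r A j
  then nth 0 (vals (window r es (cover_start r A j))) (nth 0 q' (j - cover_start r A j))
  else nth 0 es j.

Definition swap r q' (A es : seq nat) n : seq nat := map (swap_entry r q' A es) (iota 0 n).

Lemma cover_start_spec r A j :
  covered r A j -> cover_start r A j \in A /\ covers r (cover_start r A j) j.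
Proof. by move=> cv; split; [rewrite mem_nth // -has_find | exact: (nth_find 0 cv)]. Qed.

Lemma nth_swap r q' A es n j : j < n -> nth 0 (swap r q' A es n) j = swap_entry r q' A es j.
Proof. by move=> jn; rewrite (nth_map 0) ?size_iota // nth_iota. Qed.

(* The i-th term of the maximum bounding the t-th letter of q' in the
   definition of "q changeable for q'". *)
Definition candidate (q : seq nat) t i : nat :=
  if i <= t then nth 0 q i else nth 0 q i - (i - t).

Section Swap.

Variables (r : nat) (q q' : seq nat).
Hypotheses (q_pat : is_pattern r q) (q'_pat : is_pattern r q') (r_gt0 : 0 < r).
Hypothesis q_no : non_overlapping q.
Hypothesis q_q' : changeable q q'.

Let q_size : size q = r. Proof. exact: pattern_size q_pat. Qed.
Let q'_size : size q' = r. Proof. exact: pattern_size q'_pat. Qed.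
Let q_ne : 0 < size q. Proof. by rewrite q_size. Qed.
Let q'_ne : 0 < size q'. Proof. by rewrite q'_size. Qed.

Lemma first_letter_eq : nth 0 q' 0 = nth 0 q 0.
Proof. by case/and5P: q_q' => _ /eqP e _ _ _; rewrite !nth0. Qed.

Lemma last_letter_eq : nth 0 q' r.-1 = nth 0 q r.-1.
Proof. by case/and5P: q_q' => _ _ /eqP e _ _; rewrite -{1}q'_size -q_size !nth_last. Qed.

Lemma pmax_eq : pmax q' = pmax q.
Proof. by case/and5P: q_q' => _ _ _ /eqP ->. Qed.

Lemma changeable_bound t : t < r -> nth 0 q' t <= \max_(i < size q) candidate q t i.
Proof.
case/and5P: q_q' => _ _ _ _ /forallP bnd tr.
have tq : t < size q by rewrite q_size.
exact: (bnd (Ordinal tq)).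
Qed.

Variables (A es : seq nat) (n : nat).
Hypothesis es_marked : marked r q A es n.

Lemma marked_size : size es = n.
Proof. by case/and3P: es_marked => /eqP. Qed.

Lemma marked_inv j : j < n -> nth 0 es j <= j.
Proof. by case/and3P: es_marked => _ /allP es_inv _ jn; apply: es_inv; rewrite mem_iota. Qed.

Lemma marked_occ k : k \in A -> k + r <= n /\ red (window r es k) = q.
Proof. by case/and3P: es_marked => _ _ /allP occ kA; case/andP: (occ k kA) => -> /eqP. Qed.

Lemma size_vals_window k : k \in A -> size (vals (window r es k)) = (pmax q).+1.
Proof. by move=> kA; have [_ rw] := marked_occ kA; exact: size_vals_red q_pat q_ne rw. Qed.

Lemma window_entry k t : k \in A -> t < r ->
  nth 0 es (k + t) = nth 0 (vals (window r es k)) (nth 0 q t).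
Proof.
move=> kA tr; have [kr rw] := marked_occ kA.
by rewrite -(@nth_window r es k t) // red_nth ?rw // size_window // marked_size.
Qed.

Lemma window_decomp k : k \in A -> window r es k = map (nth 0 (vals (window r es k))) q.
Proof. by move=> kA; rewrite {1}(red_decomp (window r es k)) (proj2 (marked_occ kA)). Qed.

Lemma incr_on_window k s : k \in A -> {subset s <= q} ->
  incr_on (nth 0 (vals (window r es k))) s.
Proof.
move=> kA sq; apply: incr_on_nth; first exact: vals_sorted.
by apply/allP => x /sq xq; rewrite size_vals_window // ltnS -(mem_pattern _ q_pat q_ne).
Qed.

Lemma subset_q'_q : {subset q' <= q}.
Proof. by move=> x; rewrite (mem_pattern _ q_pat q_ne) -pmax_eq -(mem_pattern _ q'_pat q'_ne). Qed.

(* Two marked windows share at most one entry, since q is non-overlapping: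
   a longer overlap would reduce both to a prefix and a suffix of q. *)
Lemma marked_far k k' : k \in A -> k' \in A -> k < k' -> k + r - 1 <= k'.
Proof.
move=> kA kA' kk'; rewrite leqNgt; apply/negP => near.
set d := k' - k; set L := r - d.
have shared : drop d (window r es k) = take L (window r es k').
  rewrite /window take_takel; last by rewrite /L; lia.
  have -> : k' = d + k by rewrite /d; lia.
  by rewrite -drop_drop [RHS]take_drop; have -> : L + d = r by rewrite /L /d; lia.
have red_suffix : red (drop d (window r es k)) = red (drop d q).
  by rewrite (window_decomp kA) -map_drop red_map //; apply: incr_on_window => // x /mem_drop.
have red_prefix : red (take L (window r es k')) = red (take L q).
  by rewrite (window_decomp kA') -map_take red_map //; apply: incr_on_window => // x /mem_take.
have Lr : L < size q by rewrite q_size /L /d; lia.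
move/forallP: q_no => /(_ (Ordinal Lr)) /=.
have -> : 1 < L by rewrite /L /d; lia.
have -> : size q - L = d by rewrite q_size /L /d; lia.
by rewrite -red_suffix -red_prefix shared eqxx.
Qed.

(* The swap does not depend on which marked window is used to read an entry. *)
Lemma swap_entry_at k j : k \in A -> covers r k j ->
  swap_entry r q' A es j = nth 0 (vals (window r es k)) (nth 0 q' (j - k)).
Proof.
move=> kA ckj; have cv : covered r A j by apply/hasP; exists k.
rewrite /swap_entry cv; have [] := cover_start_spec cv.
set c := cover_start r A j => cA ccj; move: ckj ccj; rewrite /covers => /andP [kj jk] /andP [cj jc].
case: (ltngtP c k) => [ck|kc|-> //].
- have := marked_far cA kA ck => far; have -> : j - c = r.-1 by lia.
  have -> : j - k = 0 by lia.
  rewrite last_letter_eq first_letter_eq -window_entry ?ltn_predL // -window_entry //.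
  by congr nth; lia.
- have := marked_far kA cA kc => far; have -> : j - k = r.-1 by lia.
  have -> : j - c = 0 by lia.
  rewrite last_letter_eq first_letter_eq -window_entry // -window_entry ?ltn_predL //.
  by congr nth; lia.
Qed.

(* Every candidate in the changeability bound indexes a value of the window at k
   that is at most k + t: for i <= t, the value at k + i; for i > t, a value at
   least i - t below the value at k + i <= k + i. *)
Lemma window_candidate k t i : k \in A -> t < r -> i < r ->
  candidate q t i < size (vals (window r es k)) /\
  nth 0 (vals (window r es k)) (candidate q t i) <= k + t.
Proof.
move=> kA tr ir; rewrite /candidate; set v := vals (window r es k).
have sv : sorted ltn v := vals_sorted _.
have [kr _] := marked_occ kA.
have qv : forall i, i < r -> nth 0 q i < size v.
  by move=> i' ir'; rewrite /v size_vals_window // ltnS -(mem_pattern _ q_pat q_ne) mem_nth ?q_size.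
have ent : forall i, i < r -> nth 0 v (nth 0 q i) <= k + i.
  by move=> i' ir'; rewrite -window_entry //; apply: marked_inv; lia.
case: ifP => it; first by split; [exact: qv | apply: leq_trans (ent _ ir) _; lia].
split; first exact: leq_ltn_trans (leq_subr _ _) (qv _ ir).
case: (leqP (i - t) (nth 0 q i)) => big.
  have := sorted_nth_gap sv (leq_subr (i - t) (nth 0 q i)) (qv _ ir).
  by move: (ent _ ir); lia.
have -> : nth 0 q i - (i - t) = 0 by lia.
by apply: leq_trans (ent _ tr); apply: sorted_nth_le => //; exact: qv.
Qed.

Lemma swap_entry_le j : j < n -> swap_entry r q' A es j <= j.
Proof.
move=> jn; rewrite /swap_entry; case: ifP => cv; last exact: marked_inv.
have [] := cover_start_spec cv; set k := cover_start r A j => kA /andP [kj jk].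
set t := j - k; have tr : t < r by rewrite /t; lia.
set v := vals (window r es k).
pose M := \max_(i < size q) candidate q t i.
have [Mv Mle] : M < size v /\ nth 0 v M <= k + t.
  apply: (big_ind (fun m => m < size v /\ nth 0 v m <= k + t)).
  - have [v0 v0le] : candidate q t 0 < size v /\ nth 0 v (candidate q t 0) <= k + t.
      exact: window_candidate kA tr r_gt0.
    by split; [lia | apply: leq_trans v0le; apply: sorted_nth_le (vals_sorted _) _ v0].
  - by move=> x y [hx1 hx2] [hy1 hy2]; rewrite /maxn; case: ifP.
  - by move=> [i ir] _; apply: window_candidate; rewrite // -q_size.
apply: leq_trans (sorted_nth_le (vals_sorted _) (changeable_bound tr) Mv) _.
by apply: leq_trans Mle _; rewrite /t; lia.
Qed.

Lemma swap_window k : k \in A ->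
  window r (swap r q' A es n) k = map (nth 0 (vals (window r es k))) q'.
Proof.
move=> kA; have [kr _] := marked_occ kA.
rewrite /window /swap -map_drop -map_take drop_iota take_iota add0n.
have -> : minn r (n - k) = r by lia.
apply: (@eq_from_nth _ 0); first by rewrite !size_map size_iota q'_size.
move=> t; rewrite size_map size_iota => tr.
rewrite (nth_map 0) ?size_iota // nth_iota // (nth_map 0) ?q'_size // (swap_entry_at kA).
  by congr nth; congr nth; lia.
by rewrite /covers; lia.
Qed.

Lemma swap_occ k : k \in A -> red (window r (swap r q' A es n) k) = q'.
Proof.
move=> kA; rewrite swap_window // red_map ?(red_pattern q'_pat) //.
exact: incr_on_window subset_q'_q.
Qed.

Lemma swap_marked : marked r q' A (swap r q' A es n) n.
Proof.
apply/and3P; split; first by rewrite size_map size_iota.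
  by apply/allP => j; rewrite mem_iota add0n => jn; rewrite nth_swap // swap_entry_le.
by apply/allP => k kA; rewrite (proj1 (marked_occ kA)) swap_occ ?eqxx.
Qed.

Lemma swapK : swap r q A (swap r q' A es n) n = es.
Proof.
apply: (@eq_from_nth _ 0); first by rewrite size_map size_iota marked_size.
move=> j; rewrite size_map size_iota => jn; rewrite nth_swap // /swap_entry.
case: ifP => cv; last by rewrite nth_swap // /swap_entry cv.
have [] := cover_start_spec cv; set c := cover_start r A j => cA /andP [cj jc].
rewrite swap_window // vals_map; last exact: incr_on_window subset_q'_q.
rewrite (vals_pattern q'_pat q'_ne) pmax_eq -(size_vals_window cA) map_nth_iota0 // take_size.
by rewrite -window_entry //; [congr nth; lia | lia].
Qed.

End Swap.

Definition occ_set n q (e : n.-tuple 'I_n) : {set 'I_n} :=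
  [set k : 'I_n | occurs_at q (map val e) k.+1].

Definition at_least n q (A : {set 'I_n}) : pred (n.-tuple 'I_n) :=
  [pred e | is_invseq e && (A \subset occ_set q e)].

Definition exactly n q (A : {set 'I_n}) : pred (n.-tuple 'I_n) :=
  [pred e | is_invseq e && (occ_set q e == A)].

Definition positions n (A : {set 'I_n}) : seq nat := [seq val k | k <- enum A].

Lemma nth_val n (e : n.-tuple 'I_n) j (jn : j < n) :
  nth 0 (map val e) j = val (tnth e (Ordinal jn)).
Proof.
by rewrite (nth_map (tnth e (Ordinal jn))) ?size_tuple // [in RHS](tnth_nth (tnth e (Ordinal jn))).
Qed.

Lemma at_least_marked n r q (A : {set 'I_n}) e : size q = r ->
  (e \in at_least q A) = marked r q (positions A) (map val e) n.
Proof.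
move=> q_size; rewrite /marked inE size_map size_tuple eqxx /=; congr andb.
  apply/forallP/allP => [inv j|inv k].
    by rewrite mem_iota add0n => jn; rewrite (nth_val e jn); exact: inv.
  move: (inv k); rewrite mem_iota add0n ltn_ord (nth_val e (ltn_ord k)) => /(_ isT).
  by have -> : Ordinal (ltn_ord k) = k by apply: val_inj.
apply/subsetP/allP => [Aocc k|Aocc k kA].
  case/mapP => i; rewrite mem_enum => iA ->; move: (Aocc i iA).
  rewrite inE /occurs_at q_size size_map size_tuple /=.
  by have -> : i.+1 + r - 1 = i + r by lia.
move: (Aocc (val k)); rewrite map_f ?mem_enum // => /(_ isT) /andP [kr rk].
rewrite inE /occurs_at q_size size_map size_tuple /=.
have -> : k.+1 + r - 1 = k + r by lia.
by rewrite kr rk.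
Qed.

(* The swap as a map on tuples; the default [tnth e i] is never used on
   sequences marked by q, by [swap_entry_le]. *)
Definition swap_tuple n r q' (A : {set 'I_n}) (e : n.-tuple 'I_n) : n.-tuple 'I_n :=
  [tuple insubd (tnth e i) (swap_entry r q' (positions A) (map val e) i) | i < n].

Lemma swap_tupleE n r q q' (A : {set 'I_n}) e :
  is_pattern r q -> is_pattern r q' -> 0 < r -> non_overlapping q -> changeable q q' ->
  e \in at_least q A -> map val (swap_tuple r q' A e) = swap r q' (positions A) (map val e) n.
Proof.
move=> q_pat q'_pat r_gt0 q_no q_q'; rewrite (at_least_marked _ _ (pattern_size q_pat)) => e_marked.
apply: (@eq_from_nth _ 0); first by rewrite size_map size_tuple size_map size_iota.
move=> j; rewrite size_map size_tuple => jn.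
rewrite (nth_val _ jn) nth_swap // tnth_mktuple val_insubd /=.
by rewrite (leq_ltn_trans (swap_entry_le q_pat q'_pat r_gt0 q_no q_q' e_marked jn) jn).
Qed.

Lemma card_at_least_le n r q q' (A : {set 'I_n}) :
  is_pattern r q -> is_pattern r q' -> 0 < r -> non_overlapping q -> changeable q q' ->
  #|at_least q A| <= #|at_least q' A|.
Proof.
move=> q_pat q'_pat r_gt0 q_no q_q'.
have swap_val := swap_tupleE q_pat q'_pat r_gt0 q_no q_q'.
have marked_of e := at_least_marked A e (pattern_size q_pat).
have swap_in e : e \in at_least q A -> swap_tuple r q' A e \in at_least q' A.
  move=> eX; rewrite (at_least_marked _ _ (pattern_size q'_pat)) swap_val //.
  by apply: (swap_marked q_pat q'_pat r_gt0 q_no q_q'); rewrite -marked_of.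
have swap_inj : {in at_least q A &, injective (swap_tuple r q' A)}.
  move=> x y xX yX xy.
  have : swap r q (positions A) (map val (swap_tuple r q' A x)) n =
         swap r q (positions A) (map val (swap_tuple r q' A y)) n by rewrite xy.
  rewrite !swap_val // !(swapK q_pat q'_pat r_gt0 q_no q_q') -?marked_of //.
  by move/(inj_map val_inj)/val_inj.
rewrite -(card_in_imset swap_inj); apply: subset_leq_card.
by apply/subsetP => y /imsetP [x xX ->]; exact: swap_in.
Qed.

Lemma card_at_least n q (A : {set 'I_n}) :
  #|at_least q A| = \sum_(B : {set 'I_n} | A \subset B) #|exactly q B|.
Proof.
rewrite -sum1_card (partition_big (occ_set q) (fun B => A \subset B)); last first.
  by move=> e; rewrite inE => /andP [].
apply: eq_bigr => B AB; rewrite -sum1_card; apply: eq_bigl => e.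
by rewrite !inE; case: (eqVneq (occ_set q e) B) => [->|]; rewrite ?AB ?andbT ?andbF.
Qed.

(* Superset sums determine their summands (Moebius inversion on the subset
   lattice), by induction on the size of the complement. *)
Lemma superset_sum_inj (T : finType) (f g : {set T} -> nat) :
  (forall A : {set T},
     \sum_(B : {set T} | A \subset B) f B = \sum_(B : {set T} | A \subset B) g B) ->
  f =1 g.
Proof.
move=> sum_eq.
suff eq_below : forall m (A : {set T}), #|~: A| < m -> f A = g A.
  by move=> A; apply: (eq_below #|~: A|.+1).
elim=> [//|m IH] A small_A.
move: (sum_eq A); rewrite (bigD1 A) ?subxx //= [in RHS](bigD1 A) ?subxx //=.
rewrite (eq_bigr g) => [/eqP|B /andP [AB BA]]; first by rewrite eqn_add2r => /eqP.
apply: IH; have /proper_card : ~: B \proper ~: A by rewrite properC properEneq eq_sym BA AB.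
lia.
Qed.

Lemma count_Em_exactly p n T : count_Em p n T =
  if T == [seq i <- iota 1 n | i \in T] then #|exactly p [set k : 'I_n | k.+1 \in T]| else 0.
Proof.
have Em_eq (e : n.-tuple 'I_n) : (Em p (map val e) == T) =
    (T == [seq i <- iota 1 n | i \in T]) && (occ_set p e == [set k : 'I_n | k.+1 \in T]).
  rewrite /Em size_map size_tuple; apply/eqP/andP => [<- | [/eqP hT /eqP hO]].
    split; apply/eqP; first by apply: eq_in_filter => i ii; rewrite mem_filter ii andbT.
    by apply/setP => k; rewrite !inE mem_filter mem_iota add1n !ltnS ltn_ord /= andbT.
  rewrite [RHS]hT; apply: eq_in_filter => i; rewrite mem_iota => /andP [i1 i2].
  have ik : i.-1 < n by lia.
  move: (congr1 (fun S : {set 'I_n} => Ordinal ik \in S) hO); rewrite !inE /=.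
  by have -> : i.-1.+1 = i by lia.
rewrite /count_Em; case: ifP => hT; first by apply: eq_card => e; rewrite !inE Em_eq hT.
by apply: eq_card0 => e; rewrite !inE Em_eq hT andbF.
Qed.

Theorem mainTheorem3 (r : nat) (p p' : seq nat) :
  is_pattern r p -> is_pattern r p' ->
  non_overlapping p -> non_overlapping p' ->
  interchangeable p p' ->
  super_strongly_Wilf_equiv p p'.
Proof.
move=> p_pat p'_pat p_no p'_no /andP [p_p' p'_p] n T.
have [r0|r_gt0] := posnP r.
  by move: (pattern_size p_pat) (pattern_size p'_pat); rewrite r0 => /size0nil -> /size0nil ->.
have same_at_least (A : {set 'I_n}) : #|at_least p A| = #|at_least p' A|.
  apply/eqP; rewrite eqn_leq (card_at_least_le _ p_pat p'_pat) //.
  exact: card_at_least_le p'_pat p_pat r_gt0 p'_no p'_p.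
have same_exactly (B : {set 'I_n}) : #|exactly p B| = #|exactly p' B|.
  apply: (@superset_sum_inj _ (fun B => #|exactly p B|) (fun B => #|exactly p' B|)) => A.
  by rewrite -!card_at_least.
by rewrite !count_Em_exactly same_exactly.
Qed.
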